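(* Under the standing assumptions, let $H$ be a wide subgroupoid of $\mathcal G$ and set $\gamma(H)=\bigoplus_{h\in H}J_h$. Then $\gamma(H)$ is a $C(R)$-subalgebra of $R$ and $$\gamma(H)=V_R\big(R^{\beta_{\mathcal S_H}}\big),$$ where $\mathcal S_H=\{h\in H:J_h\neq\{0\}\}$ and $R^{\beta_{\mathcal S_H}}=\{r\in R:\beta_h(r1_{h^{-1}})=r1_h\ \text{for all } h\in\mathcal S_H\}$.
   Context: All rings and algebras are associative and unital. A groupoid is a nonempty set $\mathcal G$ with a partially defined associative multiplication in which every $g$ has an inverse $g^{-1}$, a left identity $r(g)=gg^{-1}$ and a right identity $d(g)=g^{-1}g$; $gh$ is defined iff $d(g)=r(h)$; $\mathcal G_0$ is the set of identities. A subgroupoid is a nonempty subset closed under inverses and defined products; it is wide if it contains $\mathcal G_0$. Standing assumptions: $K$ commutative ring, $R$ a $K$-algebra, $\mathcal G$ a finite groupoid, $\beta=(\{E_g\},\{\beta_g\})$ a unital action of $\mathcal G$ on $R$: $E_g=E_{r(g)}$ is an ideal of $R$, unital with identity $1_g$ (so $1_{g^{-1}}=1_{d(g)}$), $\beta_g:E_{g^{-1}}\to E_g$ a $K$-algebra isomorphism, $\beta_e=\mathrm{id}_{E_e}$ for $e\in\mathcal G_0$, $\beta_g\beta_h(x)=\beta_{gh}(x)$ whenever $d(g)=r(h)$, $x\in E_{h^{-1}}$; $R=\bigoplus_{e\in\mathcal G_0}E_e$; and $R$ is a $\beta$-Galois extension of $R^\beta=\{r\in R:\beta_g(r1_{g^{-1}})=r1_g\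 \forall g\}$: there exist $x_i,y_i\in R$ ($1\le i\le m$) with $\sum_i x_i\beta_g(y_i1_{g^{-1}})=1_g$ if $g\in\mathcal G_0$ and $=0$ otherwise. $C(R)$ is the center of $R$, $V_R(S)=\{r\in R: rs=sr\ \forall s\in S\}$. For $g\in\mathcal G$, $J_g=\{r\in E_g: r\beta_g(x1_{g^{-1}})=xr\ \forall x\in R\}$; the sum $\bigoplus_{h\in H}J_h$ is a direct sum inside $R$. *)

From HB Require Import structures.
From mathcomp Require Import all_boot all_order all_algebra.
Set Implicit Arguments. Unset Strict Implicit. Unset Printing Implicit Defensive.
Import GRing.Theory.
Local Open Scope ring_scope.

Record is_Kalgebra (K : comPzRingType) (R : pzRingType) (sc : K -> R -> R) : Prop := {
  kalg_scaleDr : forall a x y, sc a (x + y) = sc a x + sc a y;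
  kalg_scaleDl : forall a b x, sc (a + b) x = sc a x + sc b x;
  kalg_scaleA  : forall a b x, sc (a * b) x = sc a (sc b x);
  kalg_scale1  : forall x, sc 1 x = x;
  kalg_scaleAl : forall a x y, sc a (x * y) = sc a x * y;
  kalg_scaleAr : forall a x y, sc a (x * y) = x * sc a y }.

(* The partial multiplication is encoded by a total function [mul]; the
   product [mul g h] is meaningful (i.e. "defined") exactly when d(g) = r(h). *)
Section Groupoid.
Variables (T : finType) (mul : T -> T -> T) (inv : T -> T).

Definition gr_r (g : T) : T := mul g (inv g).
Definition gr_d (g : T) : T := mul (inv g) g.

Record is_groupoid : Prop := {
  gr_nonempty : (0 < #|T|)%N;
  gr_assoc : forall g h k, gr_d g = gr_r h -> gr_d h = gr_r k ->
               mul (mul g h) k = mul g (mul h k);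
  gr_r_mul : forall g h, gr_d g = gr_r h -> gr_r (mul g h) = gr_r g;
  gr_d_mul : forall g h, gr_d g = gr_r h -> gr_d (mul g h) = gr_d h;
  gr_lid : forall g, mul (gr_r g) g = g;
  gr_rid : forall g, mul g (gr_d g) = g;
  gr_invK : forall g, inv (inv g) = g }.

Definition gr_ids : {set T} := [set gr_r g | g : T].

Definition is_subgroupoid (H : {set T}) : Prop :=
  [/\ H != set0,
      (forall h, h \in H -> inv h \in H) &
      forall g h, g \in H -> h \in H -> gr_d g = gr_r h -> mul g h \in H].

Definition is_wide_subgroupoid (H : {set T}) : Prop :=
  is_subgroupoid H /\ gr_ids \subset H.

End Groupoid.

Section Action.
Variables (K : comPzRingType) (R : pzRingType) (sc : K -> R -> R).
Variables (T : finType) (mul : T -> T -> T) (inv : T -> T).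
(* E g x  means x \in E_g ; one g = 1_g ; beta g = beta_g : E_{g^-1} -> E_g *)
Variables (E : T -> R -> Prop) (one : T -> R) (beta : T -> R -> R).

Local Notation G0 := (gr_ids mul inv).

Record is_unital_action : Prop := {
  act_E_r : forall g x, E g x <-> E (gr_r mul inv g) x;
  act_E0 : forall g, E g 0;
  act_ED : forall g x y, E g x -> E g y -> E g (x + y);
  act_EN : forall g x, E g x -> E g (- x);
  act_EMl : forall g x y, E g y -> E g (x * y);
  act_EMr : forall g x y, E g y -> E g (y * x);
  act_one_in : forall g, E g (one g);
  act_one_l : forall g x, E g x -> one g * x = x;
  act_one_r : forall g x, E g x -> x * one g = x;
  act_beta_in : forall g x, E (inv g) x -> E g (beta g x);
  act_betaD : forall g x y, E (inv g) x -> E (inv g) y ->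
                beta g (x + y) = beta g x + beta g y;
  act_betaM : forall g x y, E (inv g) x -> E (inv g) y ->
                beta g (x * y) = beta g x * beta g y;
  act_betaZ : forall g a x, E (inv g) x -> beta g (sc a x) = sc a (beta g x);
  act_beta_inj : forall g x y, E (inv g) x -> E (inv g) y ->
                   beta g x = beta g y -> x = y;
  act_beta_surj : forall g y, E g y -> exists2 x, E (inv g) x & beta g x = y;
  act_beta_id : forall e x, e \in G0 -> E e x -> beta e x = x;
  act_beta_comp : forall g h x, gr_d mul inv g = gr_r mul inv h -> E (inv h) x ->
                    beta g (beta h x) = beta (mul g h) x;
  act_sum : forall x, exists f : T -> R,
              (forall e, e \in G0 -> E e (f e)) /\ x = \sum_(e in G0) f e;
  act_sum_direct : forall f : T -> R, (forall e, e \in G0 -> E e (f e)) ->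
              \sum_(e in G0) f e = 0 -> forall e, e \in G0 -> f e = 0 }.

Definition is_beta_Galois : Prop :=
  exists (m : nat) (x y : 'I_m -> R), forall g,
    \sum_(i < m) x i * beta g (y i * one (inv g)) = if g \in G0 then one g else 0.

Definition Jg (g : T) (r : R) : Prop :=
  E g r /\ forall x, r * beta g (x * one (inv g)) = x * r.

Definition gammaH (H : {set T}) (r : R) : Prop :=
  exists a : T -> R, (forall h, h \in H -> Jg h (a h)) /\ r = \sum_(h in H) a h.

Definition in_SH (H : {set T}) (h : T) : Prop :=
  h \in H /\ exists2 s, Jg h s & s <> 0.

Definition fixed_SH (H : {set T}) (r : R) : Prop :=
  forall h, in_SH H h -> beta h (r * one (inv h)) = r * one h.

End Action.

Definition centerR (R : pzRingType) (c : R) : Prop := forall x, c * x = x * c.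
Definition centralizer (R : pzRingType) (S : R -> Prop) (r : R) : Prop :=
  forall s, S s -> r * s = s * r.

Definition is_CR_subalgebra (R : pzRingType) (P : R -> Prop) : Prop :=
  [/\ P 0 /\ P 1,
      (forall x y, P x -> P y -> P (x + y)),
      (forall x, P x -> P (- x)),
      (forall x y, P x -> P y -> P (x * y)) &
      (forall c x, centerR c -> P x -> P (c * x))].

From HB Require Import structures.
From mathcomp Require Import all_boot all_order all_algebra.
Set Implicit Arguments. Unset Strict Implicit. Unset Printing Implicit Defensive.
Import GRing.Theory.
Local Open Scope ring_scope.

(* - Inclusion gamma(H) <= V_R(R^{beta_{S_H}}) is direct: for a_h in J_h and
     s fixed by h in S_H, a_h s = a_h beta_h(s 1_{h^-1}) = s a_h (if a_h <> 0
     then h is in S_H).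
   - For the converse, let (x_i, y_i) be a Galois coordinate system and
     tr(w) = sum_{h in H} beta_h(w 1_{h^-1}) the trace of the wide subgroupoid
     H.  Every tr(w) is fixed by all h in H, so any r in the centralizer
     commutes with the image of tr.  Putting a_h = sum_i x_i r beta_h(y_i 1),
     the dual-basis identities  sum_j x_j tr(y_j z) = z  and
     sum_i tr(w x_i) beta_h(y_i 1) = beta_h(w 1)  give r = sum_h a_h and
     a_h in J_h.
   - Any centralizer is a C(R)-subalgebra, which gives the first claim. *)

Section GroupoidFacts.
Variables (T : finType) (mul : T -> T -> T) (inv : T -> T).
Hypothesis G : is_groupoid mul inv.
Local Notation r := (gr_r mul inv).
Local Notation d := (gr_d mul inv).
Local Notation G0 := (gr_ids mul inv).

Lemma d_inv g : d (inv g) = r g.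
Proof. by rewrite /gr_d /gr_r (gr_invK G). Qed.

Lemma r_inv g : r (inv g) = d g.
Proof. by rewrite /gr_d /gr_r (gr_invK G). Qed.

Lemma r_in_ids g : r g \in G0.
Proof. by apply/imsetP; exists g. Qed.

Lemma d_in_ids g : d g \in G0.
Proof. by rewrite -r_inv r_in_ids. Qed.

Lemma ids_fixed e : e \in G0 -> [/\ r e = e, d e = e & inv e = e].
Proof.
case/imsetP=> g _ ->.
have r_r : r (r g) = r g by rewrite {2}/gr_r (gr_r_mul G) // r_inv.
have d_r : d (r g) = r g by rewrite {2}/gr_r (gr_d_mul G) ?r_inv // d_inv.
split=> //; have lid := gr_lid G (inv (r g)).
by rewrite r_inv d_r in lid; rewrite -[LHS]lid; exact: r_r.
Qed.

Lemma mul_inv_cancel g h : r h = r g -> mul g (mul (inv g) h) = h.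
Proof.
move=> e; rewrite -(gr_assoc G) ?d_inv ?r_inv //.
by rewrite -/(gr_r mul inv g) -e (gr_lid G).
Qed.

Lemma inv_mul_cancel g h : r h = d g -> mul (inv g) (mul g h) = h.
Proof. by move=> e; have := @mul_inv_cancel (inv g) h; rewrite (gr_invK G) r_inv; apply. Qed.

Lemma inv_mul_ids g h : r g = r h -> mul (inv g) h \in G0 -> g = h.
Proof.
move=> e /ids_fixed[rid _ _].
have rgd : r (mul (inv g) h) = d g by rewrite (gr_r_mul G) ?r_inv // d_inv e.
by rewrite -(mul_inv_cancel (esym e)) -rid rgd (gr_rid G).
Qed.

End GroupoidFacts.

Section ActionFacts.
Variables (K : comPzRingType) (R : pzRingType) (sc : K -> R -> R).
Variables (T : finType) (mul : T -> T -> T) (inv : T -> T).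
Variables (E : T -> R -> Prop) (one : T -> R) (beta : T -> R -> R).
Hypothesis G : is_groupoid mul inv.
Hypothesis A : is_unital_action sc mul inv E one beta.
Local Notation r := (gr_r mul inv).
Local Notation G0 := (gr_ids mul inv).

Lemma E_of_r g h z : r g = r h -> E g z -> E h z.
Proof. by move=> e /(act_E_r A) Ez; apply/(act_E_r A); rewrite -e. Qed.

Lemma one_of_r g h : r g = r h -> one g = one h.
Proof.
move=> e; have E1 : E h (one g) by apply: E_of_r e (act_one_in A g).
have E2 : E g (one h) by apply: E_of_r (esym e) (act_one_in A h).
by rewrite -[LHS](act_one_l A E1) (act_one_r A E2).
Qed.

Lemma E_mul_one h z : E h (z * one h).
Proof. exact/(act_EMl A)/(act_one_in A). Qed.

Lemma E_big g (I : finType) (P : pred I) (F : I -> R) :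
  (forall i, P i -> E g (F i)) -> E g (\sum_(i | P i) F i).
Proof. by apply: big_ind; [exact: (act_E0 A) | exact: (act_ED A)]. Qed.

Lemma ids_disjoint e f z :
  e \in G0 -> f \in G0 -> e != f -> E e z -> E f z -> z = 0.
Proof.
move=> eG fG nef Ez Fz.
pose F t := if t == e then z else if t == f then - z else 0.
have EF t : t \in G0 -> E t (F t).
  rewrite /F; case: eqP => [-> //|_]; case: eqP => [->|_] _.
    exact: (act_EN A).
  exact: (act_E0 A).
have := act_sum_direct A EF; rewrite (bigD1 e) //= (bigD1 f) /=; last first.
  by rewrite fG eq_sym.
rewrite big1 => [|t /andP[/andP[_ /negPf te] /negPf tf]]; last by rewrite /F te tf.
rewrite /F eqxx eq_sym (negPf nef) eqxx addr0 subrr => /(_ erefl e eG).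
by rewrite eqxx.
Qed.

Lemma E_orth g h u v : r g != r h -> E g u -> E h v -> u * v = 0.
Proof.
move=> ne Eu Ev.
apply: (ids_disjoint (r_in_ids mul inv g) (r_in_ids mul inv h) ne).
  exact/(act_E_r A g)/(act_EMr A).
exact/(act_E_r A h)/(act_EMl A).
Qed.

Lemma one_decomp : 1 = \sum_(e in G0) one e.
Proof.
have [f [Ef f1]] := act_sum A 1.
rewrite {1}f1; apply: eq_bigr => e eG.
have : one e * 1 = one e by rewrite mulr1.
rewrite f1 mulr_sumr (bigD1 e) //= big1 ?addr0 => [|e' /andP[e'G ne]].
  by rewrite (act_one_l A (Ef e eG)) => ->.
apply: (E_orth (g := e) (h := e')); last exact: Ef.
  by case: (ids_fixed G eG) => -> _ _; case: (ids_fixed G e'G) => -> _ _; rewrite eq_sym.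
exact: (act_one_in A).
Qed.

Lemma beta0 g : beta g 0 = 0.
Proof.
have E0 := act_E0 A (inv g).
have := act_betaD A E0 E0; rewrite addr0 => /(congr1 (fun t => t - beta g 0)).
by rewrite subrr addrK.
Qed.

Lemma beta_big g (I : finType) (P : pred I) (F : I -> R) :
  (forall i, P i -> E (inv g) (F i)) ->
  beta g (\sum_(i | P i) F i) = \sum_(i | P i) beta g (F i).
Proof.
move=> EF.
suff [] : E (inv g) (\sum_(i | P i) F i) /\
          \sum_(i | P i) beta g (F i) = beta g (\sum_(i | P i) F i) by [].
apply: (big_ind2 (fun u v => E (inv g) v /\ u = beta g v)) => //.
- by split; [exact: (act_E0 A) | rewrite beta0].
- move=> u1 v1 u2 v2 [E1 ->] [E2 ->].
  by split; [exact: (act_ED A) | rewrite (act_betaD A)].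
- by move=> i /EF.
Qed.

Lemma beta_one g : beta g (one (inv g)) = one g.
Proof.
have [u Eu bu] := act_beta_surj A (act_one_in A g).
have Eb : E g (beta g (one (inv g))) by apply/(act_beta_in A)/(act_one_in A).
rewrite -[LHS](act_one_r A Eb) -bu -(act_betaM A) ?(act_one_l A Eu) //.
exact: (act_one_in A).
Qed.

Lemma beta_mul_one h u z :
  beta h (u * z * one (inv h)) = beta h (u * one (inv h)) * beta h (z * one (inv h)).
Proof.
rewrite -(act_betaM A (E_mul_one _ _) (E_mul_one _ _)); congr (beta h _).
by rewrite -[RHS]mulrA (act_one_l A (E_mul_one _ _)) mulrA.
Qed.

Lemma beta_translate k h u v : r k = r h ->
  beta k (u * one (inv k)) * beta h (v * one (inv h)) =
  beta k (u * beta (mul (inv k) h) (v * one (inv (mul (inv k) h)))).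
Proof.
move=> e; set g := mul (inv k) h.
have dk : gr_d mul inv (inv k) = r h by rewrite (d_inv G) e.
have rg : r g = gr_d mul inv k by rewrite /g (gr_r_mul G dk) (r_inv G).
have rig : r (inv g) = r (inv h) by rewrite !(r_inv G) /g (gr_d_mul G).
have Eg : E (inv g) (v * one (inv h)) by apply: E_of_r (esym rig) (E_mul_one _ _).
have Ebg : E g (beta g (v * one (inv h))) by apply: (act_beta_in A).
have Egk b : E g b -> E (inv k) b by apply: E_of_r; rewrite rg (r_inv G).
have -> : beta h (v * one (inv h)) = beta k (beta g (v * one (inv h))).
  by rewrite (act_beta_comp A (esym rg) Eg) /g (mul_inv_cancel G).
rewrite (one_of_r rig) -(act_betaM A (E_mul_one _ _) (Egk _ Ebg)) -mulrA.
by rewrite (act_one_l A (Egk _ Ebg)).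
Qed.

End ActionFacts.

Section GaloisCoordinates.
Variables (K : comPzRingType) (R : pzRingType) (sc : K -> R -> R).
Variables (T : finType) (mul : T -> T -> T) (inv : T -> T).
Variables (E : T -> R -> Prop) (one : T -> R) (beta : T -> R -> R).
Hypothesis G : is_groupoid mul inv.
Hypothesis A : is_unital_action sc mul inv E one beta.
Variables (m : nat) (x y : 'I_m -> R).
Hypothesis galois_coords : forall g,
  \sum_(i < m) x i * beta g (y i * one (inv g)) =
  if g \in gr_ids mul inv then one g else 0.
Local Notation r := (gr_r mul inv).
Local Notation G0 := (gr_ids mul inv).

Lemma dual_orth k h :
  \sum_(i < m) beta k (x i * one (inv k)) * beta h (y i * one (inv h)) =
  if k == h then one h else 0.
Proof.
have [e|ne] := eqVneq (r k) (r h); last first.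
  rewrite big1 => [|i _]; last by apply: (E_orth A ne); apply/(act_beta_in A)/(E_mul_one A).
  by case: eqP => // kh; rewrite kh eqxx in ne.
under eq_bigr do rewrite (beta_translate G A _ _ e).
rewrite -(beta_big A) => [|i _]; last first.
  apply/(act_EMl A)/(E_of_r A (g := mul (inv k) h)).
    by rewrite (gr_r_mul G) ?(r_inv G) // (d_inv G) e.
  exact/(act_beta_in A)/(E_mul_one A).
rewrite galois_coords; case: ifP => [/(inv_mul_ids G e) kh | nG].
  rewrite -kh eqxx (one_of_r A (h := inv k)) ?(beta_one A) //.
  by rewrite (gr_r_mul G) // (d_inv G).
case: eqP => [kh|_]; last exact: (beta0 A).
by rewrite kh -/(gr_d mul inv h) (d_in_ids G) in nG.
Qed.

Variable H : {set T}.
Hypothesis HW : is_wide_subgroupoid mul inv H.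

Lemma ids_sub_H : G0 \subset H.
Proof. by case: HW. Qed.

Lemma H_inv h : h \in H -> inv h \in H.
Proof. by case: HW => -[_ hi _] _; apply: hi. Qed.

Lemma H_mul g h : g \in H -> h \in H -> gr_d mul inv g = r h -> mul g h \in H.
Proof. by case: HW => -[_ _ hm] _; apply: hm. Qed.

Definition tr (w : R) : R := \sum_(h in H) beta h (w * one (inv h)).

(* First dual-basis identity (only the identities of H contribute). *)
Lemma tr_coords z : \sum_(j < m) x j * tr (y j * z) = z.
Proof.
rewrite /tr; under eq_bigr do rewrite mulr_sumr.
rewrite exchange_big /=.
under eq_bigr => h _.
  rewrite (eq_bigr (fun j => x j * beta h (y j * one (inv h)) * beta h (z * one (inv h))));
    last by move=> j _; rewrite (beta_mul_one A) mulrA.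
  rewrite -mulr_suml galois_coords.
over.
rewrite (big_setID G0) /= (setIidPr ids_sub_H) [X in _ + X]big1 ?addr0; last first.
  by move=> h /setDP[_ /negPf ->]; rewrite mul0r.
rewrite -[RHS]mulr1 (one_decomp G A) mulr_sumr.
apply: eq_bigr => h hG; rewrite hG; case: (ids_fixed G hG) => _ _ ih.
by rewrite ih (act_beta_id A hG (E_mul_one A _ _)) (act_one_l A (E_mul_one A _ _)).
Qed.

Lemma tr_dual h w : h \in H ->
  \sum_(i < m) tr (w * x i) * beta h (y i * one (inv h)) = beta h (w * one (inv h)).
Proof.
move=> hH; rewrite /tr; under eq_bigr do rewrite mulr_suml.
rewrite exchange_big /=.
under eq_bigr => k _.
  rewrite (eq_bigr (fun i => beta k (w * one (inv k)) *
      (beta k (x i * one (inv k)) * beta h (y i * one (inv h)))));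
    last by move=> i _; rewrite (beta_mul_one A) mulrA.
  rewrite -mulr_sumr dual_orth.
over.
rewrite (bigD1 h) //= eqxx big1 ?addr0 => [|k /andP[_ /negPf ->]]; last by rewrite mulr0.
exact/(act_one_r A)/(act_beta_in A)/(E_mul_one A).
Qed.

Lemma tr_mul_one w g :
  tr w * one g = \sum_(h in H | r h == r g) beta h (w * one (inv h)).
Proof.
rewrite /tr mulr_suml (bigID (fun h => r h == r g)) /= [X in _ + X]big1 ?addr0.
  apply: eq_bigr => h /andP[_ /eqP e]; rewrite -(one_of_r A e).
  exact/(act_one_r A)/(act_beta_in A)/(E_mul_one A).
move=> h /andP[_ ne]; apply: (E_orth A ne); last exact: (act_one_in A).
exact/(act_beta_in A)/(E_mul_one A).
Qed.

Lemma translate_sum g (F : T -> R) : g \in H ->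
  \sum_(h in H | r h == r (inv g)) F (mul g h) = \sum_(k in H | r k == r g) F k.
Proof.
move=> gH; rewrite [RHS](reindex_onto (mul g) (mul (inv g))) /= => [|k /andP[_ /eqP e]];
  last exact: (mul_inv_cancel G).
apply: eq_bigl => j; apply/idP/idP.
  case/andP=> jH /eqP e; have dgj : gr_d mul inv g = r j by rewrite e (r_inv G).
  rewrite (H_mul gH jH dgj) (gr_r_mul G) // eqxx (inv_mul_cancel G) ?eqxx //.
case/andP=> /andP[gjH /eqP e] /eqP <-.
have c : gr_d mul inv (inv g) = r (mul g j) by rewrite (d_inv G) e.
by rewrite (H_mul (H_inv gH) gjH c) (gr_r_mul G c) eqxx.
Qed.

Lemma tr_fixed g w : g \in H -> beta g (tr w * one (inv g)) = tr w * one g.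
Proof.
move=> gH; rewrite !tr_mul_one -(translate_sum (fun k => beta k (w * one (inv k))) gH).
rewrite (beta_big A) => [|h /andP[_ /eqP e]]; last first.
  by apply: (E_of_r A e); exact/(act_beta_in A)/(E_mul_one A).
apply: eq_bigr => h /andP[_ /eqP e].
have dgh : gr_d mul inv g = r h by rewrite e (r_inv G).
rewrite (act_beta_comp A dgh (E_mul_one A _ _)); congr (beta _ (w * _)).
by apply: (one_of_r A); rewrite !(r_inv G) (gr_d_mul G).
Qed.

(* V_R(R^{beta_{S_H}}) <= gamma(H): such a z commutes with every trace, so
   z = sum_h a_h with a_h = sum_i x_i z beta_h(y_i 1_{h^-1}), and a_h in J_h
   by the two dual-basis identities. *)
Lemma centralizer_sub_gamma z :
  centralizer (fixed_SH inv E one beta H) z -> gammaH inv E one beta H z.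
Proof.
move=> Cz; have comm w : z * tr w = tr w * z by apply: Cz => h [hH _]; apply: tr_fixed.
pose a h := \sum_(i < m) x i * z * beta h (y i * one (inv h)).
exists a; split=> [h hH|]; last first.
  rewrite /a exchange_big /= -[LHS]mul1r -(tr_coords 1) mulr_suml.
  by apply: eq_bigr => i _; rewrite mulr1 -mulrA -comm mulrA mulr_sumr.
split=> [|u]; first by apply: (E_big A) => i _; exact/(act_EMl A)/(act_beta_in A)/(E_mul_one A).
rewrite /a mulr_sumr [RHS](eq_bigr (fun i => \sum_(j < m)
    x j * z * (tr (y j * u * x i) * beta h (y i * one (inv h))))) => [|i _]; last first.
  rewrite !mulrA -{1}(tr_coords (u * x i)) !mulr_suml; apply: eq_bigr => j _.
  by rewrite -!mulrA; congr (_ * _); rewrite !mulrA comm.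
rewrite exchange_big mulr_suml /=; apply: eq_bigr => j _.
by rewrite -mulr_sumr tr_dual // (beta_mul_one A) !mulrA.
Qed.

End GaloisCoordinates.

(* gamma(H) <= V_R(R^{beta_{S_H}}), for any subset H: an element of J_h
   commutes with everything fixed by h, and J_h <> 0 puts h in S_H. *)
Lemma gamma_sub_centralizer (K : comPzRingType) (R : pzRingType) (sc : K -> R -> R)
  (T : finType) (mul : T -> T -> T) (inv : T -> T)
  (E : T -> R -> Prop) (one : T -> R) (beta : T -> R -> R) (H : {set T}) z :
  is_unital_action sc mul inv E one beta ->
  gammaH inv E one beta H z -> centralizer (fixed_SH inv E one beta H) z.
Proof.
move=> A [a [Ja ->]] s fs; rewrite mulr_suml mulr_sumr; apply: eq_bigr => h hH.
have [Eah Jh] := Ja h hH; rewrite -Jh.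
have [->|nz] := eqVneq (a h) 0; first by rewrite !mul0r.
rewrite fs; last by split=> //; exists (a h) => //; apply/eqP.
by rewrite mulrA (act_one_r A) //; apply: (act_EMr A).
Qed.

Lemma centralizer_CR_subalgebra (R : pzRingType) (S : R -> Prop) :
  is_CR_subalgebra (centralizer S).
Proof.
split.
- by split=> s _; rewrite ?mul0r ?mulr0 ?mul1r ?mulr1.
- by move=> u v Cu Cv s Ss; rewrite mulrDl mulrDr Cu ?Cv.
- by move=> u Cu s Ss; rewrite mulNr mulrN Cu.
- by move=> u v Cu Cv s Ss; rewrite -mulrA Cv // !mulrA Cu.
- by move=> c u Cc Cu s Ss; rewrite -mulrA Cu // mulrA Cc mulrA.
Qed.

Lemma CR_subalgebra_ext (R : pzRingType) (P Q : R -> Prop) :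
  (forall z, P z <-> Q z) -> is_CR_subalgebra Q -> is_CR_subalgebra P.
Proof.
move=> PQ [[Q0 Q1] QD QN QM QZ]; split; first by split; apply/PQ.
- by move=> u v /PQ Pu /PQ Pv; apply/PQ/QD.
- by move=> u /PQ Pu; apply/PQ/QN.
- by move=> u v /PQ Pu /PQ Pv; apply/PQ/QM.
- by move=> c u Cc /PQ Pu; apply/PQ/QZ.
Qed.

Theorem lemma3p7 (K : comPzRingType) (R : pzRingType) (sc : K -> R -> R)
  (T : finType) (mul : T -> T -> T) (inv : T -> T)
  (E : T -> R -> Prop) (one : T -> R) (beta : T -> R -> R)
  (H : {set T}) :
  is_Kalgebra sc ->
  is_groupoid mul inv ->
  is_unital_action sc mul inv E one beta ->
  is_beta_Galois mul inv one beta ->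
  is_wide_subgroupoid mul inv H ->
  is_CR_subalgebra (gammaH inv E one beta H) /\
  (forall r : R, gammaH inv E one beta H r <->
                 centralizer (fixed_SH inv E one beta H) r).
Proof.
move=> _ G A [m [x [y galois_coords]]] HW.
have gamma_eq z : gammaH inv E one beta H z <-> centralizer (fixed_SH inv E one beta H) z.
  split; first exact: (gamma_sub_centralizer A).
  exact: (centralizer_sub_gamma G A galois_coords HW).
split=> //; apply: (CR_subalgebra_ext gamma_eq).
exact: centralizer_CR_subalgebra.
Qed.
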